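(* Let $X$ be an Alexandroff space and $Y$ a topological space. Let $\alpha$ be the cardinality of the set of connected components of $X$ (equivalently of $X/\Re_X$) and $\beta$ the cardinality of the set of closed points of $Y$. Then $$\mathrm{card}\{f\in Y^X : f \text{ has closed graph}\}=\beta^\alpha\le \mathrm{card}(\mathcal{C}(X,Y)),$$ where $\beta^\alpha$ denotes cardinal exponentiation.
   Context: For a map $f:X\to Y$ its graph is $G_f=\{(x,f(x)):x\in X\}$; $f$ has closed graph if $G_f$ is closed in $X\times Y$ (product topology). A point $y\in Y$ is closed if $\{y\}$ is a closed set. $Y^X$ is the set of all maps $X\to Y$ and $\mathcal{C}(X,Y)$ is the set of continuous maps $X\to Y$. A topological space $X$ is an Alexandroff space if the intersection of every nonempty family of open subsets of $X$ is open; equivalently, every point $a\in X$ has a smallest open neighbourhood, denoted $V_a$. On an Alexandroff space $X$, $\Re_X$ is the equivalence relation: $(x,y)\in\Re_X$ iff there exist $x=x_1,\ldots,x_n=y$ in $X$ with $V_{x_i}\cap V_{x_{i+1}}\neq\emptyset$ for all $i$. *)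

From HB Require Import structures.
From mathcomp Require Import all_boot all_order all_algebra.
From mathcomp Require Import all_classical all_reals all_analysis.
Unset Printing Implicit Defensive.
Local Open Scope classical_set_scope.

Definition alexandroff (X : topologicalType) : Prop :=
  forall F : set (set X), F !=set0 -> (forall U, F U -> open U) ->
    open (\bigcap_(U in F) U).

Definition conn_components (X : topologicalType) : set (set X) :=
  [set connected_component setT x | x in [set: X]].

Definition closed_points (Y : topologicalType) : set Y :=
  [set y : Y | closed [set y]].

Definition graph {X Y : Type} (f : X -> Y) : set (X * Y) :=
  [set p | p.2 = f p.1].

Definition closed_graph {X Y : topologicalType} (f : X -> Y) : Prop :=
  closed (graph f).

(* beta^alpha: the set of all maps from the components of X to the closed points of Y. *)
Definition comp_to_closed_pts (X Y : topologicalType) :=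
  [set: set_type (conn_components X) -> set_type (closed_points Y)].

From HB Require Import structures.
From mathcomp Require Import all_boot all_order all_algebra.
From mathcomp Require Import all_classical all_reals all_analysis.
Local Open Scope classical_set_scope.
Local Open Scope card_scope.

(* In an Alexandroff space every point x has a smallest open neighbourhood
   V_x, and V_x lies in the connected component of x (x is adherent to every
   point of V_x).  Hence a map is
   constant on components iff it is locally constant (constant on each V_x).
   A closed graph forces f to be locally constant ((x, f z) with z in V_x is
   adherent to the graph) and to take closed values; conversely a locally
   constant map with closed values has a closed graph.  So closed-graph maps
   are exactly the maps from the set of components to the closed points, and
   such maps, being locally constant, are continuous. *)

Definition locally_constant {X : topologicalType} {T : Type} (f : X -> T) : Prop :=
  forall x, \forall z \near x, f z = f x.

Definition component_constant {X : topologicalType} {T : Type} (f : X -> T) : Prop :=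
  forall x z, connected_component setT x z -> f z = f x.

Definition component_constant_maps (X : topologicalType) {T : Type} (B : set T) :
    set (X -> T) :=
  [set f : X -> T | (forall x, B (f x)) /\ component_constant f].

Section LocallyConstant.
Variable X : topologicalType.

Lemma clopen_connected_component_sub (A : set X) x :
  clopen A -> A x -> connected_component setT x `<=` A.
Proof.
move=> [oA cA] Ax.
suff <- : connected_component setT x `&` A = connected_component setT x.
  exact: subIsetr.
apply: component_connected; last by exists A.
- by exists x; split => //; exact: connected_component_refl.
- by exists A.
Qed.

Lemma locally_constant_component_constant {T : Type} (f : X -> T) :
  locally_constant f -> component_constant f.
Proof.
move=> fl x z.
apply: (@clopen_connected_component_sub [set w | f w = f x]) => //.
have fiber_nbhs w : f w = f x -> \forall u \near w, f u = f x.
  by move=> <-; exact: fl.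
split.
- by rewrite openE => w /fiber_nbhs.
- rewrite -openC openE => w /= fwx; apply: filterS (fl w) => u fuw.
  by rewrite /= fuw.
Qed.

Lemma locally_constant_continuous {Y : topologicalType} (f : X -> Y) :
  locally_constant f -> continuous f.
Proof.
move=> fl x B /nbhs_singleton Bfx; apply: filterS (fl x) => z fz.
by rewrite /= fz.
Qed.

Lemma locally_constant_closed_graph {Y : topologicalType} (f : X -> Y) :
  (forall x, closed_points Y (f x)) -> locally_constant f -> closed_graph f.
Proof.
move=> fclosed fl [x y] /= clxy; apply: contrapT => ygraph.
have nb : nbhs (x, y) ([set z | f z = f x] `*` ~` [set f x]).
  exists ([set z | f z = f x], ~` [set f x]) => //=; split; first exact: fl.
  apply: open_nbhs_nbhs; split; first by rewrite openC; exact: fclosed.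
  by move=> /= yfx; apply: ygraph.
have [[a b] [gab [/= fax bfx]]] := clxy _ nb.
by apply: bfx; rewrite /= -fax; exact: gab.
Qed.

Lemma closed_graph_closed_points {Y : topologicalType} (f : X -> Y) x :
  closed_graph f -> closed_points Y (f x).
Proof.
move=> fg y clfx; apply: (fg (x, y)) => B [[P Q] /= [Px Qy] PQB].
have [_ [-> Qfx]] := clfx Q Qy.
by exists (x, f x); split => //; apply: PQB; split => //; exact: nbhs_singleton.
Qed.

End LocallyConstant.

Section Components.
Variable X : topologicalType.

Let components := set_type (conn_components X).

Definition component_of (x : X) : components :=
  SigSub (mem_set (ex_intro2 (fun y => [set: X] y)
    (fun y => connected_component setT y = connected_component setT x) x I erefl)).

Definition component_repr (C : components) : X :=
  projT1 (cid2 (set_mem (valP C))).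

Lemma component_reprK : cancel component_repr component_of.
Proof.
move=> C; apply: val_inj => /=; rewrite /component_repr.
by case: cid2 => /= r _ ->.
Qed.

Lemma component_of_eq {x z} :
  connected_component setT x z -> component_of z = component_of x.
Proof. by move=> xz; apply: val_inj => /=; rewrite (same_connected_component xz). Qed.

Lemma connected_component_repr x :
  connected_component setT x (component_repr (component_of x)).
Proof.
rewrite -[X in X _](congr1 val (component_reprK (component_of x))) /=.
exact: connected_component_refl.
Qed.

Definition lift_component {T : Type} {B : set T} (g : components -> set_type B) :
    X -> T :=
  fun x => val (g (component_of x)).

Lemma lift_component_constant {T : Type} {B : set T} (g : components -> set_type B) :
  component_constant_maps X B (lift_component g).
Proof.
split => [x|x z xz]; first exact: set_valP.
by rewrite /lift_component (component_of_eq xz).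
Qed.

Lemma card_component_constant {T : Type} (B : set T) :
  component_constant_maps X B #= [set: components -> set_type B].
Proof.
apply/card_bijP.
pose restrict (f : set_type (component_constant_maps X B)) (C : components) :
  set_type B :=
  SigSub (mem_set ((set_mem (valP f)).1 (component_repr C))).
exists (fun f => SigSub (mem_set (I : setT (restrict f)))).
exists (fun g : set_type [set: components -> set_type B] =>
  SigSub (@mem_set _ (component_constant_maps X B) _
    (lift_component_constant (val g)))).
- move=> f; apply/val_inj/funext => x /=; rewrite /lift_component /=.
  exact/(set_mem (valP f)).2/connected_component_repr.
- move=> g; apply/val_inj/funext => C /=; apply: val_inj => /=.
  by rewrite /lift_component component_reprK.
Qed.

End Components.

Section AlexandroffSpace.
Variables (X : topologicalType) (alex : alexandroff X).

Definition min_nbhs (x : X) : set X :=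
  \bigcap_(U in [set U : set X | open U /\ U x]) U.

Lemma open_min_nbhs x : open (min_nbhs x).
Proof.
apply: alex; first by exists setT; split => //; exact: openT.
by move=> U [].
Qed.

Lemma min_nbhs_nbhs x : nbhs x (min_nbhs x).
Proof. by apply: open_nbhs_nbhs; split; [exact: open_min_nbhs | move=> U []]. Qed.

Lemma min_nbhs_sub x B : nbhs x B -> min_nbhs x `<=` B.
Proof. by rewrite nbhsE => -[C [oC Cx] CB] z Vz; apply: CB; exact: Vz. Qed.

Lemma min_nbhs_connected_component x : min_nbhs x `<=` connected_component setT x.
Proof.
move=> z Vz.
have clzx : closure [set z] x.
  by move=> B /min_nbhs_sub nB; exists z; split => //; apply: nB.
have : closure [set z] `<=` connected_component setT z.
  apply: connected_component_max => //; first exact: subset_closure.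
  exact/connected_closure/connected1.
move=> /(_ x clzx) /same_connected_component <-.
exact: connected_component_refl.
Qed.

Lemma component_constant_locally_constant {T : Type} (f : X -> T) :
  component_constant f -> locally_constant f.
Proof.
move=> fc x; apply: filterS (min_nbhs_nbhs x) => z /min_nbhs_connected_component.
exact: fc.
Qed.

Lemma closed_graph_locally_constant {Y : topologicalType} (f : X -> Y) :
  closed_graph f -> locally_constant f.
Proof.
move=> fg x; apply: filterS (min_nbhs_nbhs x) => z Vz.
apply: (fg (x, f z)) => B [[P Q] /= [Px Qfz] PQB].
exists (z, f z); split => //; apply: PQB; split => /=.
  exact: min_nbhs_sub Px _ Vz.
exact: nbhs_singleton.
Qed.

Lemma closed_graphE (Y : topologicalType) :
  [set f : X -> Y | closed_graph f] = component_constant_maps X (closed_points Y).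
Proof.
apply/seteqP; split => f /=.
- move=> fg; split => [x|]; first exact: closed_graph_closed_points.
  exact/locally_constant_component_constant/closed_graph_locally_constant.
- move=> [fclosed /component_constant_locally_constant].
  exact: locally_constant_closed_graph.
Qed.

Lemma component_constant_maps_continuous (Y : topologicalType) (B : set Y) :
  component_constant_maps X B `<=` [set f : X -> Y | continuous f].
Proof.
move=> f [_ /component_constant_locally_constant].
exact: locally_constant_continuous.
Qed.

Lemma card_closed_graph (Y : topologicalType) :
  [set f : X -> Y | closed_graph f] #= comp_to_closed_pts X Y.
Proof. by rewrite closed_graphE; exact: card_component_constant. Qed.

Lemma card_comp_to_closed_pts_le_continuous (Y : topologicalType) :
  comp_to_closed_pts X Y #<= [set f : X -> Y | continuous f].
Proof.
have /card_eqPle[_ card_le] := card_component_constant X (closed_points Y).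
exact/(card_le_trans card_le)/subset_card_le/component_constant_maps_continuous.
Qed.

End AlexandroffSpace.

Theorem corollary3p6 (X Y : topologicalType) :
  alexandroff X ->
  ([set f : X -> Y | closed_graph f] #= comp_to_closed_pts X Y) /\
  (comp_to_closed_pts X Y #<= [set f : X -> Y | continuous f]).
Proof.
move=> alex; split.
- exact: card_closed_graph.
- exact: card_comp_to_closed_pts_le_continuous.
Qed.
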